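(* Let $U(x)=\big(|x|_1-\tfrac{d\lambda'}{\delta'}\big)^2$ and $U^p:=(U)^p$, and let $\mathcal{L}f(x)=\frac{1}{2V}\sum_{i,j=1}^d\Gamma_{i,j}(x)\frac{\partial^2 f}{\partial x_i\partial x_j}(x)+\sum_{i=1}^d b_i(x)\frac{\partial f}{\partial x_i}(x)$. Then for every $p\in\mathbb{N}$ there exist constants $c_p,c_p'>0$ such that $$\mathcal{L}U^p(x)\le -c_pU^p(x)+c_p'\qquad\text{for all } x\in\mathbb{R}_+^d.$$ Furthermore, there exist a compact set $K\subset\mathbb{R}_+^d$, a function $f:\mathbb{R}_+^d\to[1,\infty)$ and positive constants $c_1',c_2'$ such that $$\mathcal{L}U(x)\le -c_1'f(x)+c_2'\mathbf 1_K(x)\qquad\text{for all }x\in\mathbb{R}_+^d.$$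
   Context: Fix an integer $d\ge 2$ and constants $\kappa',\lambda',\delta'>0$, $V>0$. Indices are cyclic modulo $d$: $x_0:=x_d$, $x_{d+1}:=x_1$. $\mathbb{R}_+^d=[0,\infty)^d$, $|x|_1=\sum_i|x_i|$, $e_k$ standard basis, $e_{i,j}$ matrix unit. $b(x)=\sum_{k=1}^d e_k\big(\kappa'(x_{k-1}-x_{k+1})x_k+\lambda'-\delta'x_k\big)$; $\Gamma(x)=\sum_{k}e_{k,k}\big(\kappa'(x_{k-1}+x_{k+1})x_k+\lambda'+\delta'x_k\big)-\sum_k\kappa'x_kx_{k+1}(e_{k,k+1}+e_{k+1,k})$ (a symmetric $d\times d$ matrix). *)

From HB Require Import structures.
From mathcomp Require Import all_boot all_order all_algebra.
From mathcomp Require Import all_classical all_reals all_analysis.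
Set Implicit Arguments. Unset Strict Implicit. Unset Printing Implicit Defensive.
Import Order.TTheory GRing.Theory Num.Theory.
Import numFieldNormedType.Exports.
Local Open Scope classical_set_scope.
Local Open Scope ring_scope.

(* Points of R^d are row vectors x : 'rV[R]_d, coordinate k is x 0 k, k : 'I_d.
   Cyclic indices: x_{k-1} = x (ord_pred k), x_{k+1} = x (ordS k). *)

Section Model.
Variables (R : realType) (d : nat) (kap lam del V : R).

Definition ebasis (k : 'I_d) : 'rV[R]_d := delta_mx 0 k.

Definition orthant : set 'rV[R]_d := [set x | forall k : 'I_d, 0 <= x 0 k].

Definition drift (x : 'rV[R]_d) : 'rV[R]_d :=
  \sum_(k < d) (kap * (x 0 (ord_pred k) - x 0 (ordS k)) * x 0 k + lam - del * x 0 k)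
               *: ebasis k.

Definition Gamma (x : 'rV[R]_d) : 'M[R]_d :=
  \sum_(k < d) (kap * (x 0 (ord_pred k) + x 0 (ordS k)) * x 0 k + lam + del * x 0 k)
               *: delta_mx k k
  - \sum_(k < d) (kap * x 0 k * x 0 (ordS k)) *: (delta_mx k (ordS k) + delta_mx (ordS k) k).

Definition Lgen (f : 'rV[R]_d -> R) (x : 'rV[R]_d) : R :=
  (2 * V)^-1 * \sum_(i < d) \sum_(j < d)
      Gamma x i j * 'D_(ebasis i) ('D_(ebasis j) f) x
  + \sum_(i < d) drift x 0 i * 'D_(ebasis i) f x.

(* U(x) = (|x|_1 - d lam/del)^2, with |x|_1 = sum_i x_i on R_+^d *)
Definition Ulyap (x : 'rV[R]_d) : R :=
  (\sum_(i < d) x 0 i - d%:R * lam / del) ^+ 2.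

End Model.

From HB Require Import structures.
From mathcomp Require Import all_boot all_order all_algebra.
From mathcomp Require Import all_classical all_reals all_analysis.
From mathcomp Require Import ring lra.
Set Implicit Arguments. Unset Strict Implicit. Unset Printing Implicit Defensive.
Import Order.TTheory GRing.Theory Num.Theory.
Import numFieldNormedType.Exports.
Local Open Scope classical_set_scope.
Local Open Scope ring_scope.

(* Everything depends on x only through s = x_1 + ... + x_d.  For a function
   G of s the generator is one-dimensional: the entries of Gamma(x) add up to
   d lam + del s and the coordinates of b(x) to d lam - del s, because the
   kap-terms cancel by cyclic symmetry.  With m = d lam / del and u = s - m,
   L (u^n) = n (n - 1) del (u + 2 m) u^(n-2) / (2V) - n del u^n, and
   L (u^n) + del u^n is u^(n-2) times a quadratic in u with negative leading
   coefficient, hence bounded above.  The second claim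
   follows from the first one for p = 1: U is coercive on the orthant, so
   f = 1 + U works outside a large box K. *)

Section ConcaveQuadratic.
Variable R : realFieldType.

Lemma quadratic_le_vertex (a b c u : R) :
  0 < b -> a * u + c - b * u ^+ 2 <= (a ^+ 2 + 4 * b * c) / (4 * b).
Proof.
move=> b0; rewrite ler_pdivlMr ?mulr_gt0 //.
have := sqr_ge0 (a - 2 * b * u); nra.
Qed.

Lemma sqr_le_of_quadratic_gt0 (a b c u : R) :
  0 < b -> 0 < a * u + c - b * u ^+ 2 -> u ^+ 2 <= (a ^+ 2 + 2 * b * c) / b ^+ 2.
Proof.
move=> b0 q0; rewrite ler_pdivlMr ?exprn_gt0 //.
have := sqr_ge0 (a - b * u); have := mulr_gt0 b0 q0; nra.
Qed.

Lemma sqr_pow_mul_quadratic_bounded (a b c : R) q : 0 < b ->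
  exists2 C : R, 0 < C & forall u, (u ^+ 2) ^+ q * (a * u + c - b * u ^+ 2) <= C.
Proof.
move=> b0; set B := (a ^+ 2 + 2 * b * c) / b ^+ 2.
set Q := (a ^+ 2 + 4 * b * c) / (4 * b).
exists (Num.max 0 (B ^+ q * Q) + 1) => [|u]; first by rewrite ltr_pwDr ?le_max ?lexx.
apply: (@le_trans _ _ (Num.max 0 (B ^+ q * Q))); last by rewrite lerDl.
rewrite le_max; apply/orP.
have u2q0 : 0 <= (u ^+ 2) ^+ q by rewrite exprn_ge0 ?sqr_ge0.
have [q0|qpos] := lerP (a * u + c - b * u ^+ 2) 0.
  by left; rewrite mulr_ge0_le0.
right; apply: ler_pM => //; [exact: ltW | | exact: quadratic_le_vertex].
have u2B := sqr_le_of_quadratic_gt0 b0 qpos.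
by apply: lerXn2r; rewrite // nnegrE ?sqr_ge0 // (le_trans _ u2B) ?sqr_ge0.
Qed.

End ConcaveQuadratic.

Section Derivatives.
Variable R : realType.

Lemma derive1_scale_powB (c m t : R) n :
  'D_1 (fun s => c * (s - m) ^+ n) t = c * (n%:R * (t - m) ^+ n.-1).
Proof.
have -> : (fun s => c * (s - m) ^+ n) = c *: (id - cst m) ^+ n.
  by apply/funext => s; rewrite /= exprfctE.
by rewrite derive_val /= subr0; congr (_ * _); exact: mulr1.
Qed.

Lemma derive1_powB (m t : R) n :
  'D_1 (fun s => (s - m) ^+ n) t = n%:R * (t - m) ^+ n.-1.
Proof.
have -> : (fun s => (s - m) ^+ n) = (id - cst m) ^+ n.
  by apply/funext => s; rewrite exprfctE.
by rewrite derive_val /= subr0; exact: mulr1.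
Qed.

End Derivatives.

Section Generator.
Variables (R : realType) (d : nat).

Local Notation csum x := (\sum_(i < d) x 0 i).
Local Notation mxsum A := (\sum_(i < d) \sum_(j < d) A i j).

Lemma csum_shift (h : R) (y : 'rV[R]_d) j :
  csum (h *: ebasis R j + y) = h + csum y.
Proof.
under eq_bigr do rewrite !mxE.
rewrite big_split /= (bigD1 j) //= big1 ?addr0; first by rewrite !eqxx mulr1.
by move=> i /negbTE ij; rewrite ij mulr0.
Qed.

(* Both derivatives are limits of the same difference quotient. *)
Lemma derive_ebasis_csum (G : R -> R) (y : 'rV[R]_d) j :
  'D_(ebasis R j) (fun z : 'rV[R]_d => G (csum z)) y = 'D_1 G (csum y).
Proof.
rewrite /derive; set D := (fun h : R => _); set D1 := (fun h : R => _).
suff -> : D = D1 by [].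
by apply/funext => h; rewrite /D /D1 /= csum_shift [h%:A]mulr1.
Qed.

Lemma csum_scale_delta (c : R) (k : 'I_d) : csum (c *: ebasis R k) = c.
Proof.
rewrite (bigD1 k) //= big1 ?addr0 => [|j /negbTE jk]; rewrite !mxE ?eqxx ?mulr1 //.
by rewrite jk andbF mulr0.
Qed.

Lemma mxsum_scale_delta (c : R) (a b : 'I_d) : mxsum (c *: delta_mx a b) = c.
Proof.
rewrite (bigD1 a) //= [X in _ + X]big1 ?addr0 => [|i ia]; last first.
  by apply: big1 => j _; rewrite !mxE (negbTE ia) mulr0.
rewrite (bigD1 b) //= big1 ?addr0 => [|j jb]; rewrite !mxE ?eqxx ?mulr1 //.
by rewrite (negbTE jb) andbF mulr0.
Qed.

Lemma mxsum_sum (F : 'I_d -> 'M[R]_d) :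
  mxsum (\sum_(k < d) F k) = \sum_(k < d) mxsum (F k).
Proof.
under eq_bigr do under eq_bigr do rewrite summxE.
by under eq_bigr do rewrite exchange_big; rewrite exchange_big.
Qed.

Lemma mxsumD (A B : 'M[R]_d) : mxsum (A + B) = mxsum A + mxsum B.
Proof.
rewrite -big_split; apply: eq_bigr => i _; rewrite -big_split.
by apply: eq_bigr => j _; rewrite mxE.
Qed.

Lemma mxsumB (A B : 'M[R]_d) : mxsum (A - B) = mxsum A - mxsum B.
Proof.
rewrite -sumrB; apply: eq_bigr => i _; rewrite -sumrB.
by apply: eq_bigr => j _; rewrite !mxE.
Qed.

Lemma sum_cyclic_products (x : 'rV[R]_d) :
  \sum_(k < d) x 0 (ord_pred k) * x 0 k = \sum_(k < d) x 0 (ordS k) * x 0 k.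
Proof.
rewrite (reindex_inj (@ordS_inj d)) /=.
by apply: eq_bigr => k _; rewrite ordSK mulrC.
Qed.

Variables (kap lam del V : R).

Lemma mxsum_Gamma (x : 'rV[R]_d) :
  mxsum (Gamma kap lam del x) = d%:R * lam + del * csum x.
Proof.
rewrite /Gamma mxsumB !mxsum_sum.
under eq_bigr do rewrite mxsum_scale_delta.
under [X in _ - X]eq_bigr do rewrite scalerDr mxsumD !mxsum_scale_delta.
under eq_bigr do rewrite mulrDr mulrDl -!mulrA.
under [X in _ - X]eq_bigr => k _ do rewrite -!mulrA [x 0 k * _]mulrC.
rewrite !big_split /= -!mulr_sumr sumr_const card_ord sum_cyclic_products.
rewrite -mulr_natl; ring.
Qed.

Lemma csum_drift (x : 'rV[R]_d) :
  csum (drift kap lam del x) = d%:R * lam - del * csum x.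
Proof.
rewrite /drift; under eq_bigr do rewrite summxE.
rewrite exchange_big /=; under eq_bigr do rewrite csum_scale_delta.
under eq_bigr do rewrite mulrBr mulrBl -!mulrA.
rewrite sumrB big_split sumrB /= -!mulr_sumr sumr_const card_ord.
rewrite sum_cyclic_products -mulr_natl; ring.
Qed.

Lemma Lgen_comp_csum (G : R -> R) x :
  Lgen kap lam del V (fun z : 'rV[R]_d => G (csum z)) x =
  (2 * V)^-1 * (d%:R * lam + del * csum x) * 'D_1 ('D_1 G) (csum x)
  + (d%:R * lam - del * csum x) * 'D_1 G (csum x).
Proof.
have DG j : 'D_(ebasis R j) (fun z : 'rV[R]_d => G (csum z)) = fun y => 'D_1 G (csum y).
  by apply/funext => y; exact: derive_ebasis_csum.
rewrite /Lgen; under eq_bigr do under eq_bigr do rewrite DG (derive_ebasis_csum ('D_1 G)).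
under eq_bigr do rewrite -mulr_suml.
under [X in _ + X]eq_bigr do rewrite derive_ebasis_csum.
by rewrite -!mulr_suml mxsum_Gamma csum_drift mulrA.
Qed.

Lemma Lgen_csum_powB n (m : R) (x : 'rV[R]_d) :
  Lgen kap lam del V (fun z => (csum z - m) ^+ n) x =
  (2 * V)^-1 * (d%:R * lam + del * csum x) * (n%:R * (n.-1%:R * (csum x - m) ^+ n.-2))
  + (d%:R * lam - del * csum x) * (n%:R * (csum x - m) ^+ n.-1).
Proof.
rewrite (Lgen_comp_csum (fun s => (s - m) ^+ n)) derive1_powB.
have -> : 'D_1 (fun s => (s - m) ^+ n) = fun s => n%:R * (s - m) ^+ n.-1.
  by apply/funext => s; rewrite derive1_powB.
by rewrite derive1_scale_powB.
Qed.

Lemma Lgen_Ulyap_pow p (x : 'rV[R]_d) (m := d%:R * lam / del) :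
  Lgen kap lam del V (fun y => Ulyap lam del y ^+ p) x =
  (2 * V)^-1 * (d%:R * lam + del * csum x)
    * ((2 * p)%:R * ((2 * p).-1%:R * (csum x - m) ^+ (2 * p).-2))
  + (d%:R * lam - del * csum x) * ((2 * p)%:R * (csum x - m) ^+ (2 * p).-1).
Proof.
have -> : (fun y => Ulyap lam del y ^+ p) = fun y => (csum y - m) ^+ (2 * p).
  by apply/funext => y; rewrite /Ulyap -exprM.
exact: Lgen_csum_powB.
Qed.

Hypothesis del_gt0 : 0 < del.

Lemma Lgen_Ulyap_pow_succ q (x : 'rV[R]_d) (m := d%:R * lam / del) (u := csum x - m)
    (A := (2 * V)^-1 * del * (2 * q%:R + 2) * (2 * q%:R + 1)) :
  Lgen kap lam del V (fun y => Ulyap lam del y ^+ q.+1) x =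
  (u ^+ 2) ^+ q * (A * u + 2 * A * m - (2 * q%:R + 1) * del * u ^+ 2)
  - del * Ulyap lam del x ^+ q.+1.
Proof.
have dlamE : d%:R * lam = del * m by rewrite /m [RHS]mulrC divfK ?gt_eqF.
have twoSqE : (2 * q.+1)%:R = 2 * q%:R + 2 :> R.
  by rewrite natrM -addn1 natrD; ring.
have twoq1E : (2 * q).+1%:R = 2 * q%:R + 1 :> R by rewrite -addn1 natrD natrM.
have [twoSq2 twoSq1] : (2 * q.+1).-2 = (2 * q)%N /\ (2 * q.+1).-1 = (2 * q).+1.
  by rewrite mulnS.
rewrite Lgen_Ulyap_pow twoSq2 twoSq1 /Ulyap -/m -/u dlamE (_ : csum x = u + m); last first.
  by rewrite /u subrK.
rewrite twoSqE twoq1E [u ^+ (2 * q).+1]exprS [_ ^+ q.+1]exprS exprM.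
set W := (u ^+ 2) ^+ q; rewrite /A; ring.
Qed.

Theorem Lgen_Ulyap_pow_drift p : exists c c' : R, 0 < c /\ 0 < c' /\
  forall x : 'rV[R]_d, Lgen kap lam del V (fun y => Ulyap lam del y ^+ p) x
                         <= - c * Ulyap lam del x ^+ p + c'.
Proof.
case: p => [|q].
  exists del, (del + 1); split=> //; split=> [|x]; first by rewrite addr_gt0.
  by rewrite Lgen_Ulyap_pow !mul0r mulr0 addr0 expr0 mulr1; lra.
have [|C C0 bounded] := sqr_pow_mul_quadratic_bounded
  ((2 * V)^-1 * del * (2 * q%:R + 2) * (2 * q%:R + 1))
  (2 * ((2 * V)^-1 * del * (2 * q%:R + 2) * (2 * q%:R + 1)) * (d%:R * lam / del)) q
  (b := (2 * q%:R + 1) * del).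
  by rewrite mulr_gt0 //; lra.
exists del, C; split=> //; split=> // x; rewrite Lgen_Ulyap_pow_succ.
by have := bounded (csum x - d%:R * lam / del); lra.
Qed.

End Generator.

Section Coercivity.
Variables (R : realType) (d : nat).

Lemma Ulyap_coercive (lam del r : R) : exists M : R, forall x : 'rV[R]_d,
  orthant x -> (exists i, M < x 0 i) -> r <= Ulyap lam del x.
Proof.
set m := d%:R * lam / del; exists (m + `|r| + 1) => x x_ge0 [i x_large].
have x_le_sum : x 0 i <= \sum_(j < d) x 0 j.
  by rewrite (bigD1 i) //= lerDl sumr_ge0.
have u_large : `|r| + 1 < \sum_(j < d) x 0 j - m by lra.
rewrite /Ulyap -/m; move: (\sum_(j < d) x 0 j - m) u_large (ler_norm r) => u.
have := normr_ge0 r; nra.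
Qed.

Lemma coercive_drift_compact (F G : 'rV[R]_d -> R) (c c' : R) : 0 < c -> 0 < c' ->
  (forall x, orthant x -> 0 <= F x) ->
  (forall r, exists M : R, forall x, orthant x -> (exists i, M < x 0 i) -> r <= F x) ->
  (forall x, orthant x -> G x <= - c * F x + c') ->
  exists (K : set 'rV[R]_d) (f : 'rV[R]_d -> R) (c1 c2 : R),
     compact K /\ K `<=` @orthant R d /\
     (forall x, orthant x -> 1 <= f x) /\ 0 < c1 /\ 0 < c2 /\
     forall x, orthant x -> G x <= - c1 * f x + c2 * (\1_K x : R).
Proof.
move=> c0 c'0 F_ge0 F_coercive G_drift.
have [M F_large] := F_coercive (1 + 2 * c' / c).
pose K := [set v : 'rV[R]_d | forall i, `[0, M]%classic (v ord0 i)].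
exists K, (fun x => 1 + F x), (c / 2), (c' + c / 2).
split; first exact: (@rV_compact R d _ (fun=> @segment_compact R 0 M)).
split; first by move=> v Kv i; have /andP[] := Kv i.
split; first by move=> x /F_ge0; rewrite lerDl.
split; first by rewrite divr_gt0.
split; first by rewrite addr_gt0 ?divr_gt0.
move=> x x_ge0; have := G_drift x x_ge0; have := F_ge0 x x_ge0.
case: (pselect (K x)) => Kx; rewrite indicE ?(mem_set Kx) ?(memNset Kx) /=.
  nra.
have [i x_large] : exists i, M < x 0 i.
  apply: contra_notP Kx => x_small i; rewrite /= in_itv /= x_ge0 /=.
  by rewrite leNgt; apply/negP => ?; apply: x_small; exists i.
have := F_large x x_ge0 (ex_intro _ i x_large).
have : 2 * c' / c * c = 2 * c' by rewrite divfK ?gt_eqF.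
nra.
Qed.

End Coercivity.

Theorem lemma4p2 (R : realType) (d : nat) (kap lam del V : R) :
  (2 <= d)%N -> 0 < kap -> 0 < lam -> 0 < del -> 0 < V ->
  (forall p : nat, exists c c' : R, 0 < c /\ 0 < c' /\
     forall x : 'rV[R]_d, orthant x ->
       Lgen kap lam del V (fun y => Ulyap lam del y ^+ p) x
         <= - c * Ulyap lam del x ^+ p + c')
  /\
  (exists (K : set 'rV[R]_d) (f : 'rV[R]_d -> R) (c1 c2 : R),
     compact K /\ K `<=` @orthant R d /\
     (forall x, orthant x -> 1 <= f x) /\ 0 < c1 /\ 0 < c2 /\
     forall x : 'rV[R]_d, orthant x ->
       Lgen kap lam del V (Ulyap lam del) x <= - c1 * f x + c2 * (\1_K x : R)).
Proof.
move=> _ _ _ del_gt0 _.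
have pow_drift := @Lgen_Ulyap_pow_drift R d kap lam del V del_gt0.
split=> [p | ].
  have [c [c' [c0 [c'0 drift]]]] := pow_drift p.
  by exists c, c'; do 2!split=> //; move=> x _; exact: drift.
have [c [c' [c0 [c'0 drift]]]] := pow_drift 1%N.
have U1 : (fun y : 'rV[R]_d => Ulyap lam del y ^+ 1) = Ulyap lam del.
  by apply/funext => y; rewrite expr1.
apply: (@coercive_drift_compact R d (Ulyap lam del) _ c c' c0 c'0).
- by move=> x _; exact: sqr_ge0.
- exact: Ulyap_coercive.
- by move=> x _; have := drift x; rewrite U1 expr1.
Qed.
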